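(* Let $B$ be an even unimodular lattice of rank $r$ with a fixed basis, and let $I_{1,1}$ have standard basis $x,y$ ($\langle x,x\rangle=1=-\langle y,y\rangle$, $\langle x,y\rangle=0$). Let $(\tfrac12)I_{1,1}=\{\tfrac12(p x+q y): p,q\in\mathbb{Z},\ p\equiv q \pmod 2\}$ with the form extended bilinearly from $I_{1,1}$, and regard $L=B\oplus I_{1,1}$ and $M=B\oplus(\tfrac12)I_{1,1}$ as $\mathbb{Z}$-submodules of the same rational quadratic space $(B\oplus I_{1,1})\otimes\mathbb{Q}$. Then $O(M)\cong O(L)$; the isomorphism is given by the fact that every isometry of $M$ (extended $\mathbb{Q}$-linearly) maps $L$ onto $L$, and every isometry of $L$ (extended $\mathbb{Q}$-linearly) maps $M$ onto $M$.
   Context: $O(L)$ denotes the group of isometries of a lattice (or $\mathbb{Z}$-module with a $\mathbb{Q}$-valued symmetric bilinear form) $L$ onto itself. Even: all norms $\langle\eta,\eta\rangle$ even; unimodular: Gram determinant $\pm1$. *)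

From HB Require Import structures.
From mathcomp Require Import all_boot all_order all_algebra.
Set Implicit Arguments. Unset Strict Implicit. Unset Printing Implicit Defensive.
Import Order.TTheory GRing.Theory Num.Theory.
Local Open Scope ring_scope.

Definition is_intQ (a : rat) : Prop := exists z : int, a = z%:~R.

Definition int_vec n (v : 'rV[rat]_n) : Prop := forall i, is_intQ (v 0 i).

Definition bform n (G : 'M[rat]_n) (v w : 'rV[rat]_n) : rat := (v *m G *m w^T) 0 0.

(* B = Z^r with Gram matrix G (w.r.t. the fixed basis) is an even unimodular
   lattice: G symmetric, Gram determinant +-1, all norms of lattice vectors
   are even integers. *)
Definition even_unimodular r (G : 'M[rat]_r) : Prop :=
  G^T = G /\ (\det G = 1 \/ \det G = -1) /\
  forall v : 'rV[rat]_r, int_vec v ->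
    exists k : int, bform G v v = 2%:R * k%:~R.

Definition J11 : 'M[rat]_2 :=
  \matrix_(i, j) (if i == j then (if i == 0 then 1 else -1) else 0).

Definition gramBI r (G : 'M[rat]_r) : 'M[rat]_(r + 2) := block_mx G 0 0 J11.

Definition inL r (v : 'rV[rat]_(r + 2)) : Prop := int_vec v.

Definition inM r (v : 'rV[rat]_(r + 2)) : Prop :=
  int_vec (lsubmx v) /\
  exists p q : int, (2 %| p - q)%Z /\
    rsubmx v 0 0 = p%:~R / 2%:R /\ rsubmx v 0 1 = q%:~R / 2%:R.

(* A is (the Q-linear extension of) an isometry of the lattice S (a Z-submodule
   of full rank of the rational quadratic space with Gram matrix F), acting on
   row vectors: A preserves the form, is invertible and maps S onto S. *)
Definition lattice_isometry n (F : 'M[rat]_n) (S : 'rV[rat]_n -> Prop)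
  (A : 'M[rat]_n) : Prop :=
  A *m F *m A^T = F /\ A \in unitmx /\
  (forall v, S v -> S (v *m A)) /\
  (forall w, S w -> exists v, S v /\ v *m A = w).

From HB Require Import structures.
From mathcomp Require Import all_boot all_order all_algebra.
From mathcomp Require Import ring lra zify.
Set Implicit Arguments. Unset Strict Implicit. Unset Printing Implicit Defensive.
Import Order.TTheory GRing.Theory Num.Theory.
Local Open Scope ring_scope.

(* In the common rational space, M is the dual of the even sublattice
   {v in L | <v, v> even} of L, and conversely L consists of the vectors of M
   that lie in the dual of M or have odd norm.  Both descriptions are phrased
   in terms of the form alone, so an isometry of the rational space that
   preserves one of the lattices preserves the other. *)

Section MatrixOverSubring.
Variables (R : comUnitRingType) (S : subringClosed R).

Lemma trmx_mxOver m n (A : 'M[R]_(m, n)) : A \is a mxOver S -> A^T \is a mxOver S.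
Proof. by move=> /mxOverP AS; apply/mxOverP => i j; rewrite mxE. Qed.

Lemma det_mxOver n (A : 'M[R]_n) : A \is a mxOver S -> \det A \in S.
Proof.
move=> /mxOverP AS; apply: rpred_sum => s _.
by rewrite rpredMsign rpred_prod.
Qed.

Lemma adj_mxOver n (A : 'M[R]_n) : A \is a mxOver S -> \adj A \is a mxOver S.
Proof.
move=> /mxOverP AS; apply/mxOverP => i j; rewrite mxE /cofactor rpredMsign.
by apply: det_mxOver; apply/mxOverP => k l; rewrite !mxE.
Qed.

Lemma invmx_mxOver n (A : 'M[R]_n) :
  A \is a mxOver S -> (\det A)^-1 \in S -> invmx A \is a mxOver S.
Proof. by move=> AS dAS; rewrite /invmx; case: ifP => // _; rewrite mxOverZ ?adj_mxOver. Qed.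

End MatrixOverSubring.

Lemma int_vecP n (v : 'rV[rat]_n) : int_vec v <-> v \is a mxOver Num.int.
Proof.
split=> [vZ | /mxOverP vZ i]; last exact/intrP.
by apply/mxOverP => i j; rewrite ord1; apply/intrP; exact: vZ.
Qed.

Lemma delta_mx_int m n (i : 'I_m) (j : 'I_n) : delta_mx i j \is a mxOver (@Num.int rat).
Proof. by apply/mxOverP => k l; rewrite mxE; case: (_ && _). Qed.

Section BilinearForm.
Variables (n : nat) (F : 'M[rat]_n).

Lemma bformDl u v w : bform F (u + v) w = bform F u w + bform F v w.
Proof. by rewrite /bform !mulmxDl mxE. Qed.

Lemma bformDr u v w : bform F w (u + v) = bform F w u + bform F w v.
Proof. by rewrite /bform linearD mulmxDr mxE. Qed.

Lemma bform_deltar v j : bform F v (delta_mx 0 j) = (v *m F) 0 j.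
Proof. by rewrite /bform trmx_delta -colE !mxE. Qed.

Lemma bform_delta i j : bform F (delta_mx 0 i) (delta_mx 0 j) = F i j.
Proof. by rewrite bform_deltar -rowE mxE. Qed.

Lemma bform_mulmx A v w : A *m F *m A^T = F -> bform F (v *m A) (w *m A) = bform F v w.
Proof.
move=> AF; rewrite /bform trmx_mul !mulmxA.
have -> : v *m A *m F *m A^T = v *m (A *m F *m A^T) by rewrite !mulmxA.
by rewrite AF.
Qed.

Lemma bform_mxOver_int v w : F \is a mxOver Num.int ->
  v \is a mxOver Num.int -> w \is a mxOver Num.int -> bform F v w \is a Num.int.
Proof. by move=> FZ vZ wZ; apply/(mxOverP _ 0 0); rewrite !mxOverM ?trmx_mxOver. Qed.

End BilinearForm.

Lemma even_gram_mxOver_int n (G : 'M[rat]_n) : G^T = G ->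
  (forall v, int_vec v -> exists k : int, bform G v v = 2%:R * k%:~R) ->
  G \is a mxOver Num.int.
Proof.
move=> symG evenG; apply/mxOverP => i j.
have half_norm v : v \is a mxOver Num.int -> bform G v v / 2 \is a Num.int.
  by move/int_vecP/evenG => [k ->]; rewrite mulrC mulKf // rpred_int.
have -> : G i j = bform G (delta_mx 0 i + delta_mx 0 j) (delta_mx 0 i + delta_mx 0 j) / 2
                  - bform G (delta_mx 0 i) (delta_mx 0 i) / 2
                  - bform G (delta_mx 0 j) (delta_mx 0 j) / 2.
  have Gji : G j i = G i j by rewrite -[in LHS]symG mxE.
  by rewrite !bformDl !bformDr !bform_delta Gji; field.
apply: rpredB; first apply: rpredB; apply/half_norm; rewrite ?delta_mx_int //.
by apply/mxOverP => k l; rewrite mxE; apply: rpredD; apply: (mxOverP (delta_mx_int _ _)).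
Qed.

Lemma unimodular_dual_int n (G : 'M[rat]_n) v : G \is a mxOver Num.int ->
  \det G = 1 \/ \det G = -1 ->
  (forall w, w \is a mxOver Num.int -> bform G v w \is a Num.int) ->
  v \is a mxOver Num.int.
Proof.
move=> GZ detG vdual.
have detGV : (\det G)^-1 \is a Num.int by case: detG => ->; rewrite ?invr1 ?invrN1 ?rpredN rpred1.
have Gu : G \in unitmx by rewrite unitmxE unitfE; case: detG => ->.
rewrite -(mulmxK Gu v) mxOverM ?invmx_mxOver //.
by apply/mxOverP => i j; rewrite ord1 -bform_deltar vdual ?delta_mx_int.
Qed.

Section LatticeIsometry.
Variables (n : nat) (F A : 'M[rat]_n).

Definition stable_under (S : 'rV[rat]_n -> Prop) := forall v, S (v *m A) <-> S v.

Definition dual_lattice (S : 'rV[rat]_n -> Prop) v :=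
  forall w, S w -> bform F v w \is a Num.int.

Lemma lattice_isometryE S : lattice_isometry F S A <->
  [/\ A *m F *m A^T = F, A \in unitmx & stable_under S].
Proof.
split=> [[AF [Au [SA AS]]] | [AF Au stS]].
  split=> // v; split=> [Sv | /SA //]; have [u [Su uA]] := AS _ Sv.
  by rewrite -(mulmxK Au v) -uA mulmxK.
do 3!split=> //; first by move=> v /stS.
by move=> w Sw; exists (w *m invmx A); rewrite -stS mulmxKV.
Qed.

Lemma stable_ext S T : (forall v, S v <-> T v) -> stable_under S <-> stable_under T.
Proof. by move=> ST; split=> stS v; [rewrite -!ST | rewrite !ST]; exact: stS. Qed.

Lemma stable_and S T : stable_under S -> stable_under T -> stable_under (fun v => S v /\ T v).
Proof. by move=> stS stT v; rewrite stS stT. Qed.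

Lemma stable_or S T : stable_under S -> stable_under T -> stable_under (fun v => S v \/ T v).
Proof. by move=> stS stT v; rewrite stS stT. Qed.

Hypotheses (AF : A *m F *m A^T = F) (Au : A \in unitmx).

Lemma stable_norm (P : rat -> Prop) : stable_under (fun v => P (bform F v v)).
Proof. by move=> v; rewrite bform_mulmx. Qed.

Lemma stable_dual S : stable_under S -> stable_under (dual_lattice S).
Proof.
move=> stS v; split=> vdual w Sw.
  by rewrite -(bform_mulmx _ _ AF) vdual ?stS.
by rewrite -(mulmxKV Au w) bform_mulmx // vdual // -stS mulmxKV.
Qed.

End LatticeIsometry.

Lemma dvdz2_mul (x y : int) : (2 %| x * y)%Z = (2 %| x)%Z || (2 %| y)%Z.
Proof. by rewrite !dvdzE abszM Euclid_dvdM. Qed.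

Lemma half_intrE (x : int) : (x%:~R / 2 : rat) \is a Num.int = (2 %| x)%Z.
Proof.
apply/intrP/dvdzP => [[k xk] | [k ->]]; last by exists k; rewrite intrM mulfK.
by exists k; apply: (@intr_inj rat); rewrite intrM -xk mulfVK.
Qed.

Definition evenQ (x : rat) := exists k : int, x = k%:~R /\ (2 %| k)%Z.
Definition oddQ (x : rat) := exists k : int, x = k%:~R /\ ~~ (2 %| k)%Z.

(* [vecBI b s t] is the vector b + s x + t y. *)
Definition vecBI r (b : 'rV[rat]_r) (s t : rat) : 'rV[rat]_(r + 2) :=
  row_mx b (\row_j (if j == 0 then s else t)).

Section Coordinates.
Variables (r : nat) (b : 'rV[rat]_r) (s t : rat).

Lemma vecBI_l : lsubmx (vecBI b s t) = b.
Proof. by rewrite row_mxKl. Qed.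

Lemma vecBI_r0 : rsubmx (vecBI b s t) 0 0 = s.
Proof. by rewrite row_mxKr mxE. Qed.

Lemma vecBI_r1 : rsubmx (vecBI b s t) 0 1 = t.
Proof. by rewrite row_mxKr mxE. Qed.

End Coordinates.

Lemma vecBI_eta r (v : 'rV[rat]_(r + 2)) :
  v = vecBI (lsubmx v) (rsubmx v 0 0) (rsubmx v 0 1).
Proof.
rewrite -{1}(hsubmxK v); congr row_mx; apply/rowP => j; rewrite !mxE.
by case: j => [[|[|m]] lt_j2] //=; congr (_ _ _); apply: val_inj.
Qed.

Lemma int_vec_row_mx m n (u : 'rV[rat]_m) (w : 'rV[rat]_n) :
  int_vec (row_mx u w) <-> int_vec u /\ int_vec w.
Proof.
split=> [uwZ | [uZ wZ] k].
  by split=> i; [rewrite -(row_mxEl u w) | rewrite -(row_mxEr u w)].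
by rewrite -(splitK k); case: (split k) => i /=; rewrite ?row_mxEl ?row_mxEr.
Qed.

Lemma inLP r (v : 'rV[rat]_(r + 2)) :
  inL v <-> exists b (a c : int), int_vec b /\ v = vecBI b a%:~R c%:~R.
Proof.
split=> [vZ | [b [a [c [bZ ->]]]]].
  have /int_vec_row_mx [bZ hZ] : int_vec (row_mx (lsubmx v) (rsubmx v)) by rewrite hsubmxK.
  have [a Ea] := hZ 0; have [c Ec] := hZ 1.
  by exists (lsubmx v), a, c; split=> //; rewrite {1}(vecBI_eta v) Ea Ec.
apply/int_vec_row_mx; split=> // j; rewrite mxE.
by case: (j == 0); [exists a | exists c].
Qed.

Lemma inMP r (v : 'rV[rat]_(r + 2)) :
  inM v <-> exists b (p d : int),
    int_vec b /\ v = vecBI b (p%:~R / 2) ((p - 2 * d)%:~R / 2).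
Proof.
split=> [[bZ [p [q [pq [Ep Eq]]]]] | [b [p [d [bZ ->]]]]].
  exists (lsubmx v), p, ((p - q) %/ 2)%Z; split=> //.
  by rewrite {1}(vecBI_eta v) Ep Eq; do 3 f_equal; lia.
rewrite /inM vecBI_l vecBI_r0 vecBI_r1; split=> //.
by exists p, (p - 2 * d); split=> //; lia.
Qed.

Lemma bform_vecBI r (G : 'M[rat]_r) b b' s t s' t' :
  bform (gramBI G) (vecBI b s t) (vecBI b' s' t') = bform G b b' + (s * s' - t * t').
Proof.
rewrite /bform /gramBI /vecBI mul_row_block !mulmx0 addr0 add0r.
rewrite tr_row_mx mul_row_col mxE; congr (_ + _).
rewrite !mxE !big_ord_recl big_ord0 !mxE !big_ord_recl !big_ord0 !mxE /=.
by ring.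
Qed.

Lemma int_vec0 n : int_vec (0 : 'rV[rat]_n).
Proof. by move=> i; rewrite mxE; exists 0. Qed.

Lemma pair_half_int (a c p d : int) : (2 %| a - c)%Z ->
  a%:~R * (p%:~R / 2) - c%:~R * ((p - 2 * d)%:~R / 2) \is a @Num.int rat.
Proof.
move=> ac2; have -> : a%:~R * (p%:~R / 2) - c%:~R * ((p - 2 * d)%:~R / 2)
                     = ((a - c) * p)%:~R / 2 + (c * d)%:~R :> rat by field.
by apply: rpredD; rewrite ?half_intrE ?dvdz_mulr ?rpred_int.
Qed.

Definition even_part n (F : 'M[rat]_n) (S : 'rV[rat]_n -> Prop) w :=
  S w /\ evenQ (bform F w w).

Section LatticesLM.
Variables (r : nat) (G : 'M[rat]_r).
Hypothesis EU : even_unimodular G.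
Local Notation F := (gramBI G).
Implicit Types (v w : 'rV[rat]_(r + 2)) (b : 'rV[rat]_r).

Let G_int : G \is a mxOver Num.int.
Proof. by case: EU => symG [_ evenG]; exact: even_gram_mxOver_int. Qed.

Lemma pair_vecBI_int b b' s t s' t' : int_vec b -> int_vec b' ->
  (bform F (vecBI b s t) (vecBI b' s' t') \is a Num.int) = (s * s' - t * t' \is a Num.int).
Proof. by move=> /int_vecP bZ /int_vecP b'Z; rewrite bform_vecBI rpredDl // bform_mxOver_int. Qed.

Lemma norm_vecBI b s t : int_vec b ->
  exists k : int, bform F (vecBI b s t) (vecBI b s t) = (2 * k)%:~R + (s * s - t * t).
Proof. by case: EU => _ [_ evenG] /evenG [k Ek]; exists k; rewrite bform_vecBI Ek intrM. Qed.

Lemma inL_inM v : inL v -> inM v.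
Proof.
move=> /inLP [b [a [c [bZ ->]]]]; apply/inMP.
by exists b, (2 * a), (a - c); split=> //; congr vecBI; field.
Qed.

Lemma inL_dual_or_odd v : inL v -> dual_lattice F (@inM r) v \/ oddQ (bform F v v).
Proof.
move=> /inLP [b [a [c [bZ ->]]]].
have [ac2 | ac_odd] := boolP (2 %| a - c)%Z; [left | right].
  by move=> w /inMP [b' [p [d [b'Z ->]]]]; rewrite pair_vecBI_int // pair_half_int.
have [k ->] := norm_vecBI a%:~R c%:~R bZ.
exists (2 * k + (a - c) * (a + c)); split; first by ring.
suff : ~~ (2 %| (a - c) * (a + c))%Z by lia.
by rewrite dvdz2_mul negb_or ac_odd /=; lia.
Qed.

Lemma inM_even_inL b (p d : int) : int_vec b -> (2 %| p)%Z ->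
  inL (vecBI b (p%:~R / 2) ((p - 2 * d)%:~R / 2)).
Proof.
move=> bZ /dvdzP [u ->]; apply/inLP.
by exists b, u, (u - d); split=> //; congr vecBI; field.
Qed.

Lemma inM_dual_inL v : inM v -> dual_lattice F (@inM r) v -> inL v.
Proof.
move=> /inMP [b [p [d [bZ ->]]]] vdual; apply: inM_even_inL => //.
have pair_half (p' d' : int) : (p%:~R / 2) * (p'%:~R / 2)
    - ((p - 2 * d)%:~R / 2) * ((p' - 2 * d')%:~R / 2) \is a @Num.int rat.
  rewrite -(pair_vecBI_int _ _ _ _ bZ (@int_vec0 r)); apply: vdual.
  by apply/inMP; exists 0, p', d'; split=> //; exact: int_vec0.
(* Pair v with the vectors (x + y)/2 and (x - y)/2 of M. *)
have d2 : (2 %| d)%Z.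
  by have := pair_half 1 0; rewrite (_ : _ - _ = d%:~R / 2) ?half_intrE //; field.
have pd2 : (2 %| p - d)%Z.
  by have := pair_half 1 1; rewrite (_ : _ - _ = (p - d)%:~R / 2) ?half_intrE //; field.
lia.
Qed.

Lemma inM_odd_inL v : inM v -> oddQ (bform F v v) -> inL v.
Proof.
move=> /inMP [b [p [d [bZ ->]]]] [n [En n_odd]]; apply: inM_even_inL => //.
have [k Ek] := norm_vecBI (p%:~R / 2) ((p - 2 * d)%:~R / 2) bZ.
have {En Ek} n_eq : n = 2 * k + d * (p - d).
  by apply: (@intr_inj rat); rewrite -En Ek; field.
have : ~~ (2 %| d * (p - d))%Z by lia.
rewrite dvdz2_mul negb_or => /andP [d_odd pd_odd]; lia.
Qed.

Lemma inM_dual_even v : inM v -> dual_lattice F (even_part F (@inL r)) v.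
Proof.
move=> /inMP [b [p [d [bZ ->]]]] w [/inLP [b' [a [c [b'Z ->]]]] [n [En n_even]]].
rewrite pair_vecBI_int // [_ * a%:~R]mulrC [_ * c%:~R]mulrC pair_half_int //.
have [k Ek] := norm_vecBI a%:~R c%:~R b'Z.
have {En Ek} n_eq : n = 2 * k + (a - c) * (a + c).
  by apply: (@intr_inj rat); rewrite -En Ek; ring.
have : (2 %| (a - c) * (a + c))%Z by lia.
rewrite dvdz2_mul => /orP [] //; lia.
Qed.

Lemma dual_even_inM v : dual_lattice F (even_part F (@inL r)) v -> inM v.
Proof.
rewrite (vecBI_eta v); move: (lsubmx v) (rsubmx v 0 0) (rsubmx v 0 1) => b s t vdual.
have pair b' (a c : int) : int_vec b' -> (2 %| a - c)%Z ->
    bform F (vecBI b s t) (vecBI b' a%:~R c%:~R) \is a Num.int.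
  move=> b'Z ac2; apply: vdual; split; first by apply/inLP; exists b', a, c.
  have [k ->] := norm_vecBI a%:~R c%:~R b'Z.
  exists (2 * k + (a - c) * (a + c)); split; first by ring.
  have : (2 %| (a - c) * (a + c))%Z by exact: dvdz_mulr.
  lia.
(* Test v against b' in B, x + y and 2x, all of even norm. *)
have bZ : int_vec b.
  apply/int_vecP; case: EU => _ [detG _].
  apply: (unimodular_dual_int G_int detG) => b' /int_vecP b'Z.
  by have := pair b' 0 0 b'Z (dvdz0 _); rewrite bform_vecBI !mulr0 subrr addr0.
have [p Ep] : exists p : int, s = p%:~R / 2.
  have /intrP [p Ep] := pair 0 2 0 (@int_vec0 r) isT.
  by exists p; rewrite -Ep bform_vecBI /bform trmx0 mulmx0 mxE; field.
have [m Em] : exists m : int, t = (p - 2 * m)%:~R / 2.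
  have /intrP [m Em] := pair 0 1 1 (@int_vec0 r) isT.
  exists m; move: Em; rewrite bform_vecBI /bform trmx0 mulmx0 mxE Ep intrB intrM.
  lra.
by apply/inMP; exists b, p, m; split=> //; rewrite Ep Em.
Qed.

Lemma inLE v : inL v <-> inM v /\ (dual_lattice F (@inM r) v \/ oddQ (bform F v v)).
Proof.
split=> [Lv | [Mv [vdual | v_odd]]]; first by split; [exact: inL_inM | exact: inL_dual_or_odd].
  exact: inM_dual_inL.
exact: inM_odd_inL.
Qed.

Lemma inME v : inM v <-> dual_lattice F (even_part F (@inL r)) v.
Proof. by split; [exact: inM_dual_even | exact: dual_even_inM]. Qed.

End LatticesLM.

Theorem mainTheorem3 (r : nat) (G : 'M[rat]_r) :
  even_unimodular G ->
  forall A : 'M[rat]_(r + 2),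
    lattice_isometry (gramBI G) (@inM r) A <->
    lattice_isometry (gramBI G) (@inL r) A.
Proof.
move=> EU A; split=> /lattice_isometryE [AF Au stA]; apply/lattice_isometryE; split=> //.
  apply/(stable_ext A (inLE EU)).
  by apply: stable_and => //; apply: stable_or; [exact: stable_dual | exact: stable_norm].
apply/(stable_ext A (inME EU)).
by apply: stable_dual => //; apply: stable_and => //; exact: stable_norm.
Qed.
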